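(* For any $p,q>0$ with $\tfrac1p+\tfrac1q=1$, the function \[ f(s)=\frac{s\log(ps)+(1-s)\log(q(1-s))}{(s-\tfrac1p)^2},\qquad s\in(0,1), \] is convex. *)

From Stdlib Require Import Reals Lra.
Open Scope R_scope.

Definition convex_on_open (a b : R) (f : R -> R) : Prop :=
  forall x y t, a < x < b -> a < y < b -> 0 <= t <= 1 ->
    f (t * x + (1 - t) * y) <= t * f x + (1 - t) * f y.

(* The function of the paper,
     f(s) = (s log(p s) + (1-s) log(q (1-s))) / (s - 1/p)^2 ,
   with its removable singularity at s = 1/p filled in by the limit value
   p q / 2 (numerator and its derivative vanish at 1/p when 1/p+1/q=1,
   second derivative 1/(s(1-s)) = pq there). *)
Definition fpq (p q : R) (s : R) : R :=
  if Req_EM_T s (/ p) then p * q / 2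
  else (s * ln (p * s) + (1 - s) * ln (q * (1 - s))) / (s - / p) ^ 2.

(* The numerator of f is the binary relative entropy D(s || a) with a = 1/p,
   1 - a = 1/q, which vanishes to second order at s = a.  Taylor's formula
   with integral remainder therefore gives
     f(s) = int_0^1 (1 - t) k(a + t (s - a)) dt,   k(x) = 1/x + 1/(1 - x),
   and since k is convex and s |-> a + t (s - a) is affine, the integrand is
   convex in s for every t, hence so is its integral. *)
From Stdlib Require Import Reals Lra.
From Coquelicot Require Import Coquelicot.
Open Scope R_scope.

Lemma convex_comb_open_interval (lo hi u v l : R) :
  lo < u < hi -> lo < v < hi -> 0 <= l <= 1 -> lo < l * u + (1 - l) * v < hi.
Proof.
  intros Hu Hv Hl.
  assert (0 <= l * (u - lo)) by (apply Rmult_le_pos; lra).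
  assert (0 <= (1 - l) * (v - lo)) by (apply Rmult_le_pos; lra).
  assert (0 <= l * (hi - u)) by (apply Rmult_le_pos; lra).
  assert (0 <= (1 - l) * (hi - v)) by (apply Rmult_le_pos; lra).
  destruct (Req_dec l 0) as [->|Hl0]; [lra|].
  assert (0 < l * (u - lo)) by (apply Rmult_lt_0_compat; lra).
  assert (0 < l * (hi - u)) by (apply Rmult_lt_0_compat; lra).
  split; nra.
Qed.

Lemma convex_on_open_ext (a b : R) (f g : R -> R) :
  (forall s, a < s < b -> f s = g s) -> convex_on_open a b g -> convex_on_open a b f.
Proof.
  intros Efg Hg x y l Hx Hy Hl.
  rewrite !Efg; auto using convex_comb_open_interval.
Qed.

Lemma convex_on_open_RInt (a b : R) (F : R -> R -> R) (f : R -> R) :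
  (forall s, a < s < b -> is_RInt (F s) 0 1 (f s)) ->
  (forall t, 0 <= t <= 1 -> convex_on_open a b (fun s => F s t)) ->
  convex_on_open a b f.
Proof.
  intros HF Hconv x y l Hx Hy Hl.
  pose proof (convex_comb_open_interval a b x y l Hx Hy Hl) as Hz.
  pose proof (is_RInt_plus _ _ _ _ _ _
    (is_RInt_scal _ _ _ l _ (HF x Hx)) (is_RInt_scal _ _ _ (1 - l) _ (HF y Hy))) as Ixy.
  rewrite <- (is_RInt_unique _ _ _ _ (HF _ Hz)).
  replace (l * f x + (1 - l) * f y)
    with (RInt (fun t => plus (scal l (F x t)) (scal (1 - l) (F y t))) 0 1)
    by (apply is_RInt_unique; exact Ixy).
  apply RInt_le; [lra | eexists; apply HF; exact Hz | eexists; exact Ixy |].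
  intros t Ht. apply (Hconv t); lra.
Qed.

Lemma Rinv_convex (u v l : R) : 0 < u -> 0 < v -> 0 <= l <= 1 ->
  / (l * u + (1 - l) * v) <= l * / u + (1 - l) * / v.
Proof.
  intros Hu Hv Hl.
  destruct (convex_comb_open_interval 0 (u + v) u v l) as [Hw _]; try lra.
  assert (Egap : l * / u + (1 - l) * / v - / (l * u + (1 - l) * v)
            = l * (1 - l) * (u - v) ^ 2 / (u * v * (l * u + (1 - l) * v))).
  { field; repeat split; lra. }
  enough (0 <= l * (1 - l) * (u - v) ^ 2 / (u * v * (l * u + (1 - l) * v))) by lra.
  apply Rdiv_le_0_compat.
  - apply Rmult_le_pos; [apply Rmult_le_pos; lra | apply pow2_ge_0].
  - apply Rmult_lt_0_compat; [apply Rmult_lt_0_compat|]; lra.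
Qed.

Definition relent (a x : R) : R :=
  x * (ln x - ln a) + (1 - x) * (ln (1 - x) - ln (1 - a)).

Definition relent_deriv (a x : R) : R := (ln x - ln a) - (ln (1 - x) - ln (1 - a)).

Definition relent_curv (x : R) : R := / x + / (1 - x).

Lemma relent_curv_convex : convex_on_open 0 1 relent_curv.
Proof.
  intros u v l Hu Hv Hl. unfold relent_curv.
  pose proof (Rinv_convex u v l ltac:(lra) ltac:(lra) Hl) as H1.
  pose proof (Rinv_convex (1 - u) (1 - v) l ltac:(lra) ltac:(lra) Hl) as H2.
  replace (1 - (l * u + (1 - l) * v)) with (l * (1 - u) + (1 - l) * (1 - v)) by ring.
  lra.
Qed.

Definition taylor_kernel (a s t : R) : R := (1 - t) * relent_curv (a + t * (s - a)).

Lemma taylor_point_in_unit (a s t : R) :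
  0 < a < 1 -> 0 < s < 1 -> 0 <= t <= 1 -> 0 < a + t * (s - a) < 1.
Proof.
  intros Ha Hs Ht.
  replace (a + t * (s - a)) with (t * s + (1 - t) * a) by ring.
  exact (convex_comb_open_interval 0 1 s a t Hs Ha Ht).
Qed.

Lemma taylor_kernel_convex (a t : R) : 0 < a < 1 -> 0 <= t <= 1 ->
  convex_on_open 0 1 (fun s => taylor_kernel a s t).
Proof.
  intros Ha Ht x y l Hx Hy Hl. unfold taylor_kernel.
  replace (a + t * (l * x + (1 - l) * y - a))
    with (l * (a + t * (x - a)) + (1 - l) * (a + t * (y - a))) by ring.
  pose proof (relent_curv_convex _ _ l
    (taylor_point_in_unit a x t Ha Hx Ht) (taylor_point_in_unit a y t Ha Hy Ht) Hl) as Hk.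
  apply Rmult_le_compat_l with (r := 1 - t) in Hk; lra.
Qed.

Lemma taylor_kernel_continuous (a s t : R) : 0 < a < 1 -> 0 < s < 1 -> 0 <= t <= 1 ->
  continuous (taylor_kernel a s) t.
Proof.
  intros Ha Hs Ht. destruct (taylor_point_in_unit a s t Ha Hs Ht).
  apply (@ex_derive_continuous R_AbsRing R_NormedModule).
  unfold taylor_kernel, relent_curv. auto_derive. repeat split; lra.
Qed.

Definition taylor_quotient (a s : R) : R :=
  if Req_EM_T s a then relent_curv a / 2 else relent a s / (s - a) ^ 2.

Lemma taylor_quotient_RInt (a s : R) : 0 < a < 1 -> 0 < s < 1 ->
  is_RInt (taylor_kernel a s) 0 1 (taylor_quotient a s).
Proof.
  intros Ha Hs. unfold taylor_quotient.
  assert (Hcont : forall t, Rmin 0 1 <= t <= Rmax 0 1 -> continuous (taylor_kernel a s) t).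
  { rewrite Rmin_left, Rmax_right; try lra. intros t Ht. now apply taylor_kernel_continuous. }
  destruct (Req_EM_T s a) as [->|Hsa].
  - replace (relent_curv a / 2)
      with (minus ((1 - 1 ^ 2 / 2) * relent_curv a) ((0 - 0 ^ 2 / 2) * relent_curv a))
      by (unfold minus, plus, opp; simpl; field).
    apply (is_RInt_derive (fun t => (t - t ^ 2 / 2) * relent_curv a)); auto.
    intros t _. unfold taylor_kernel. auto_derive; [easy|].
    replace (a + t * (a - a)) with a by ring. field.
  - (* Taylor's integral remainder for [relent a] at [a], where it vanishes
       together with [relent_deriv a]. *)
    set (prim t := ((1 - t) * (s - a) * relent_deriv a (a + t * (s - a))
                    + relent a (a + t * (s - a))) / (s - a) ^ 2).
    replace (relent a s / (s - a) ^ 2) with (minus (prim 1) (prim 0)).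
    + apply (is_RInt_derive prim); auto.
      rewrite Rmin_left, Rmax_right; try lra. intros t Ht.
      destruct (taylor_point_in_unit a s t Ha Hs Ht).
      unfold prim, taylor_kernel, relent, relent_deriv, relent_curv. auto_derive.
      * repeat split; lra.
      * assert (s - a <> 0) by lra. field. repeat split; lra.
    + unfold minus, plus, opp, prim, relent, relent_deriv; simpl.
      replace (a + 1 * (s - a)) with s by ring. replace (a + 0 * (s - a)) with a by ring.
      rewrite !Rminus_diag. assert (s - a <> 0) by lra. field. auto.
Qed.

Lemma taylor_quotient_convex (a : R) : 0 < a < 1 -> convex_on_open 0 1 (taylor_quotient a).
Proof.
  intros Ha. apply (convex_on_open_RInt 0 1 (taylor_kernel a)).
  - intros s Hs. now apply taylor_quotient_RInt.
  - intros t Ht. now apply taylor_kernel_convex.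
Qed.

Lemma fpq_taylor_quotient (p q s : R) : 0 < p -> 0 < q -> / p + / q = 1 -> 0 < s < 1 ->
  fpq p q s = taylor_quotient (/ p) s.
Proof.
  intros hp hq hpq Hs. unfold fpq, taylor_quotient.
  assert (Hq : 1 - / p = / q) by lra.
  destruct (Req_EM_T s (/ p)) as [_|_].
  - unfold relent_curv. rewrite Hq, !Rinv_inv.
    assert (Hsum : p * q = p + q).
    { assert (E : p * q * (/ p + / q) = q + p) by (field; lra).
      rewrite hpq in E. lra. }
    lra.
  - unfold relent. rewrite Hq, !ln_mult, !ln_Rinv by lra. f_equal. ring.
Qed.

Theorem lemmaC1 (p q : R) (hp : 0 < p) (hq : 0 < q) (hpq : / p + / q = 1) :
  convex_on_open 0 1 (fpq p q).
Proof.
  assert (Ha : 0 < / p < 1).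
  { pose proof (Rinv_0_lt_compat p hp). pose proof (Rinv_0_lt_compat q hq). lra. }
  apply (convex_on_open_ext 0 1 _ (taylor_quotient (/ p))).
  - intros s Hs. now apply fpq_taylor_quotient.
  - now apply taylor_quotient_convex.
Qed.
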